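(* Let $E$ be a normed space over $\mathbb K$. Let $\ell^\infty(E)$ be the space of bounded sequences $(f_n)_{n\in\mathbb N}$ in $E$ with the norm $\|(f_n)\|=\sup_n\|f_n\|$, and $c_0(E)=\{(f_n)\in\ell^\infty(E): \|f_n\|\to0\}$. Then (1) $c_0(E)$ is a closed linear subspace of $\ell^\infty(E)$, so $\ell^\infty(E)/c_0(E)$ with the quotient norm is a normed space over $\mathbb K$; (2) $\ell^\infty(E)/c_0(E)$ is spherically complete; (3) the diagonal map $E\to\ell^\infty(E)/c_0(E)$, $x\mapsto[(x,x,x,\dots)]$, is a linear isometry. In particular every normed space over $\mathbb K$ embeds linearly isometrically into a spherically complete normed space over $\mathbb K$.
   Context: $\mathbb K$: nontrivially normed field with ultrametric absolute value; normed space over $\mathbb K$: normed vector space with $\|x+y\|\le\max(\|x\|,\|y\|)$. Spherically complete: every decreasing sequence of closed balls (radii $\ge0$) has nonempty intersection. *)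

From HB Require Import structures.
From mathcomp Require Import all_boot all_order all_algebra.
From mathcomp Require Import all_classical all_reals all_analysis.
Set Implicit Arguments. Unset Strict Implicit. Unset Printing Implicit Defensive.
Import Order.TTheory GRing.Theory Num.Theory.
Import numFieldNormedType.Exports.
Local Open Scope classical_set_scope.
Local Open Scope ring_scope.

Section Defs.
Context {R : realType}.

Definition ultra_absval (K : fieldType) (abs : K -> R) : Prop :=
  [/\ forall x, 0 <= abs x,
      forall x, abs x = 0 <-> x = 0,
      forall x y, abs (x * y) = abs x * abs y &
      forall x y, abs (x + y) <= Num.max (abs x) (abs y)].

Definition nontrivial_absval (K : fieldType) (abs : K -> R) : Prop :=
  exists x : K, 0 < abs x < 1.

Definition ultra_norm (K : fieldType) (abs : K -> R) (E : lmodType K)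
    (nE : E -> R) : Prop :=
  [/\ forall x, 0 <= nE x,
      forall x, nE x = 0 <-> x = 0,
      forall (a : K) x, nE (a *: x) = abs a * nE x &
      forall x y, nE (x + y) <= Num.max (nE x) (nE y)].

Variables (K : fieldType) (E : lmodType K) (nE : E -> R).

Definition linf (f : nat -> E) : Prop := exists M : R, forall n, nE (f n) <= M.

Definition supnorm (f : nat -> E) : R := sup (range (fun n => nE (f n))).

Definition c0 (f : nat -> E) : Prop := (fun n => nE (f n)) @ \oo --> (0 : R).

Definition qnorm (f : nat -> E) : R :=
  inf [set supnorm (fun n => f n - g n) | g in c0].

Definition qdist (f g : nat -> E) : R := qnorm (fun n => f n - g n).

Definition diag (x : E) : nat -> E := fun _ => x.

End Defs.

Definition closed_ball {R : realType} {X : Type} (X_in : X -> Prop)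
  (d : X -> X -> R) (c : X) (r : R) : set X :=
  [set y | X_in y /\ d y c <= r].

Definition spherically_complete {R : realType} {X : Type} (X_in : X -> Prop)
  (d : X -> X -> R) : Prop :=
  forall (c : nat -> X) (r : nat -> R),
    (forall k, X_in (c k)) -> (forall k, 0 <= r k) ->
    (forall k, closed_ball X_in d (c k.+1) (r k.+1) `<=` closed_ball X_in d (c k) (r k)) ->
    exists y, forall k, closed_ball X_in d (c k) (r k) y.

(* The quotient norm of the class of a bounded sequence f is limsup ||f n||
   (qnorm_leP), so the norm axioms of l^oo(E)/c_0(E) are inherited termwise
   from those of E, and the diagonal x |-> [(x, x, ...)] is isometric.
   For spherical completeness, let B(c_k, r_k) be nested balls.  The centres
   satisfy qdist c_j c_i <= r_i for i <= j, so for every j there is an N_j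
   beyond which ||c_j n - c_i n|| <= r_i + 1/(j+1) for all i <= j at once.
   The diagonal sequence y n := c_(m n) n, where m n is the largest j <= n
   with N_j <= n (or 0 if there is none), then lies in every ball. *)
From Pilot Require Import Defs.
From HB Require Import structures.
From mathcomp Require Import all_boot all_order all_algebra.
From mathcomp Require Import all_classical all_reals all_analysis.
From mathcomp Require Import lra.
Import Order.TTheory GRing.Theory Num.Theory.
Import numFieldNormedType.Exports.
Local Open Scope classical_set_scope.
Local Open Scope ring_scope.

Definition diag_index (N : nat -> nat) (n : nat) : nat :=
  \max_(k < n.+1 | (N k <= n)%N) k.

Lemma diag_indexP (N : nat -> nat) {k n} : (k <= n)%N -> (N k <= n)%N ->
  (k <= diag_index N n)%N /\ (N (diag_index N n) <= n)%N.
Proof.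
move=> kn Nkn; pose k' : 'I_n.+1 := Ordinal (kn : (k < n.+1)%N).
split; first exact: (leq_bigmax_cond k').
have A_gt0 : (0 < #|[pred i : 'I_n.+1 | (N i <= n)%N]|)%N.
  by apply/card_gt0P; exists k'.
rewrite /diag_index.
by have [i0 + ->] := eq_bigmax_cond (fun i : 'I_n.+1 => nat_of_ord i) A_gt0.
Qed.

Section UltrametricSequences.
Context {R : realType} {K : fieldType} {abs : K -> R} {E : lmodType K}.
Context {nE : E -> R}.
Hypothesis Habs : ultra_absval abs.
Hypothesis HnE : ultra_norm abs nE.

Lemma abs_ge0 a : 0 <= abs a. Proof. by case: Habs. Qed.

Lemma abs1 : abs 1 = 1.
Proof.
case: Habs => _ abs_eq0 absM _.
have abs1_neq0 : abs 1 != 0 by apply/eqP => /abs_eq0/eqP; rewrite oner_eq0.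
by apply: (mulIf abs1_neq0); rewrite mul1r -absM mulr1.
Qed.

Lemma absN1 : abs (-1) = 1.
Proof.
case: Habs => abs_ge0 _ absM _.
have := absM (-1) (-1); rewrite mulrNN mulr1 abs1 => sq1.
have := abs_ge0 (-1); nra.
Qed.

Lemma absVK a : a != 0 -> abs a * abs a^-1 = 1.
Proof. by case: Habs => _ _ absM _ a0; rewrite -absM mulfV // abs1. Qed.

Lemma nE_ge0 x : 0 <= nE x. Proof. by case: HnE. Qed.
Lemma nE0 : nE 0 = 0. Proof. by case: HnE => _ nE_eq0 _ _; apply/nE_eq0. Qed.
Lemma nEZ a x : nE (a *: x) = abs a * nE x. Proof. by case: HnE. Qed.
Lemma nED x y : nE (x + y) <= Num.max (nE x) (nE y). Proof. by case: HnE. Qed.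

Lemma nEN x : nE (- x) = nE x.
Proof. by rewrite -scaleN1r nEZ absN1 mul1r. Qed.

Lemma nEB x y : nE (x - y) <= Num.max (nE x) (nE y).
Proof. by rewrite -(nEN y) nED. Qed.

Lemma c0P f : c0 nE f <->
  forall e : R, 0 < e -> exists N, forall n, (N <= n)%N -> nE (f n) <= e.
Proof.
have distE n : `|0 - nE (f n)| = nE (f n) by rewrite sub0r normrN ger0_norm ?nE_ge0.
split=> [/cvgrPdist_le cvgf e e0 | Hf].
  have [N _ HN] := cvgf e e0.
  by exists N => n Nn; rewrite -distE; exact: HN.
apply/cvgrPdist_le => e e0; have [N HN] := Hf e e0.
by exists N => // n Nn; rewrite /= distE; exact: HN.
Qed.

Lemma linf_eventually f N M :
  (forall n, (N <= n)%N -> nE (f n) <= M) -> linf nE f.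
Proof.
elim: N M => [|N IH] M HM; first by exists M => n; exact: HM.
apply: (IH (Num.max M (nE (f N)))) => n.
rewrite leq_eqVlt => /orP[/eqP<-|/HM fnM]; first by rewrite le_max lexx orbT.
by rewrite le_max fnM.
Qed.

Lemma c0_linf {f} : c0 nE f -> linf nE f.
Proof. by move=> /c0P/(_ 1 ltr01) [N HN]; exact: linf_eventually HN. Qed.

Lemma linfD {f g} : linf nE f -> linf nE g -> linf nE (fun n => f n + g n).
Proof.
move=> [M1 HM1] [M2 HM2]; exists (Num.max M1 M2) => n.
by apply: le_trans (nED _ _) _; rewrite ge_max !le_max HM1 HM2 orbT.
Qed.

Lemma linfB {f g} : linf nE f -> linf nE g -> linf nE (fun n => f n - g n).
Proof.
move=> [M1 HM1] [M2 HM2]; exists (Num.max M1 M2) => n.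
by apply: le_trans (nEB _ _) _; rewrite ge_max !le_max HM1 HM2 orbT.
Qed.

Lemma linfZ a {f} : linf nE f -> linf nE (fun n => a *: f n).
Proof.
by move=> [M HM]; exists (abs a * M) => n; rewrite nEZ ler_wpM2l ?abs_ge0.
Qed.

Lemma c0_0 : c0 nE (fun _ => 0).
Proof. by apply/c0P => e e0; exists 0%N => n _; rewrite nE0 ltW. Qed.

Lemma c0N {f} : c0 nE f -> c0 nE (fun n => - f n).
Proof.
move=> /c0P Hf; apply/c0P => e e0; have [N HN] := Hf e e0.
by exists N => n Nn; rewrite nEN HN.
Qed.

Lemma c0_lin a f g : c0 nE f -> c0 nE g -> c0 nE (fun n => a *: f n + g n).
Proof.
move=> /c0P Hf /c0P Hg; apply/c0P => e e0.
have ea0 : 0 < e / (abs a + 1) by rewrite divr_gt0 // ltr_wpDl ?abs_ge0.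
have [N1 HN1] := Hf _ ea0; have [N2 HN2] := Hg _ e0.
exists (maxn N1 N2) => n; rewrite geq_max => /andP[n1 n2].
apply: le_trans (nED _ _) _; rewrite ge_max HN2 // andbT nEZ.
have := HN1 n n1; rewrite ler_pdivlMr ?ltr_wpDl ?abs_ge0 //.
have := nE_ge0 (f n); have := abs_ge0 a; nra.
Qed.

Lemma supnorm_ub f n : linf nE f -> nE (f n) <= supnorm nE f.
Proof.
move=> [M HM]; apply: sup_upper_bound; last by exists n.
by split; [exists (nE (f 0%N)), 0%N | exists M => _ [m _ <-]].
Qed.

Lemma ge_supnorm f M : (forall n, nE (f n) <= M) -> supnorm nE f <= M.
Proof.
by move=> HM; apply: ge_sup; [exists (nE (f 0%N)), 0%N | move=> _ [m _ <-]].
Qed.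

Lemma supnorm_ge0 f : 0 <= supnorm nE f.
Proof.
have [fsup|nfsup] := pselect (has_sup (range (fun n => nE (f n)))).
  by apply: le_trans (nE_ge0 (f 0%N)) _; apply: sup_upper_bound => //; exists 0%N.
by rewrite /supnorm sup_out.
Qed.

Lemma c0_closed (fk : nat -> nat -> E) (g : nat -> E) :
  (forall k, c0 nE (fk k)) -> linf nE g ->
  (fun k => supnorm nE (fun n => fk k n - g n)) @ \oo --> (0 : R) -> c0 nE g.
Proof.
move=> fk_c0 g_linf /cvgrPdist_le fk_cvg; apply/c0P => e e0.
have [k _ Hk] := fk_cvg e e0.
have fkg_le : supnorm nE (fun n => fk k n - g n) <= e.
  by have := Hk k (leqnn k); rewrite /= sub0r normrN ger0_norm ?supnorm_ge0.
have [N HN] := (c0P _).1 (fk_c0 k) e e0.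
exists N => n Nn; rewrite -[g n](subKr (fk k n)).
apply: le_trans (nEB _ _) _; rewrite ge_max HN //=.
apply: le_trans fkg_le; apply: supnorm_ub; apply: linfB => //; exact: c0_linf.
Qed.

Lemma qnorm_ge0 f : 0 <= qnorm nE f.
Proof.
apply: lb_le_inf; last by move=> _ [g _ <-]; exact: supnorm_ge0.
by exists (supnorm nE (fun n => f n - 0)), (fun _ => 0) => //; exact: c0_0.
Qed.

Lemma qnorm_le_supnorm f g :
  c0 nE g -> qnorm nE f <= supnorm nE (fun n => f n - g n).
Proof.
move=> g_c0; apply: ge_inf; last by exists g.
by exists 0 => _ [h _ <-]; exact: supnorm_ge0.
Qed.

(* Subtracting the truncation of f below N, which is in c_0, leaves the tail. *)
Lemma qnorm_le_eventually f N M :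
  (forall n, (N <= n)%N -> nE (f n) <= M) -> qnorm nE f <= M.
Proof.
move=> HM; pose g n := if (n < N)%N then f n else 0.
have g_c0 : c0 nE g.
  apply/c0P => e e0; exists N => n; rewrite /g leqNgt => /negbTE->.
  by rewrite nE0 ltW.
apply: le_trans (@qnorm_le_supnorm f g g_c0) _; apply: ge_supnorm => n; rewrite /g.
case: ltnP => [_|/HM fnM]; last by rewrite subr0.
by rewrite subrr nE0 (le_trans (nE_ge0 _) (HM N (leqnn N))).
Qed.

Lemma eventually_le_qnorm f M : linf nE f -> qnorm nE f < M ->
  exists N, forall n, (N <= n)%N -> nE (f n) <= M.
Proof.
move=> f_linf fM; have [|_ [g g_c0 <-] fg_lt] := inf_lt _ fM.
  by exists (supnorm nE (fun n => f n - 0)), (fun _ => 0) => //; exact: c0_0.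
have gap : 0 < M - supnorm nE (fun n => f n - g n) by rewrite subr_gt0.
have [N HN] := (c0P g).1 g_c0 _ gap.
exists N => n Nn; rewrite -[f n](subrK (g n)).
apply: le_trans (nED _ _) _; rewrite ge_max; apply/andP; split.
  apply: le_trans (ltW fg_lt); apply: supnorm_ub.
  by apply: linfB => //; exact: c0_linf.
by apply: le_trans (HN n Nn) _; rewrite lerBlDr lerDl supnorm_ge0.
Qed.

Lemma qnorm_leP f M : linf nE f -> (qnorm nE f <= M <->
  forall e : R, 0 < e -> exists N, forall n, (N <= n)%N -> nE (f n) <= M + e).
Proof.
move=> f_linf; split=> [fM e e0 | HM].
  by apply: eventually_le_qnorm => //; apply: le_lt_trans fM _; rewrite ltrDl.
apply/ler_addgt0Pr => e e0; have [N HN] := HM e e0; exact: qnorm_le_eventually HN.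
Qed.

Lemma qnorm_le_c0 f g : linf nE f -> linf nE g -> c0 nE (fun n => f n - g n) ->
  qnorm nE f <= qnorm nE g.
Proof.
move=> f_linf g_linf fg_c0; apply/(qnorm_leP _ _ f_linf) => e e0.
have [N1 HN1] := (qnorm_leP _ _ g_linf).1 (lexx _) e e0.
have [N2 HN2] := (c0P _).1 fg_c0 e e0.
exists (maxn N1 N2) => n; rewrite geq_max => /andP[n1 n2].
rewrite -[f n](subrK (g n)); apply: le_trans (nED _ _) _.
rewrite ge_max HN1 // andbT; apply: le_trans (HN2 n n2) _.
by rewrite lerDr qnorm_ge0.
Qed.

Lemma qnorm_c0_eq f g : linf nE f -> linf nE g -> c0 nE (fun n => f n - g n) ->
  qnorm nE f = qnorm nE g.
Proof.
move=> f_linf g_linf fg_c0; apply: le_anti; rewrite qnorm_le_c0 //=.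
apply: qnorm_le_c0 => //; have := c0N fg_c0.
by congr (c0 nE _); apply: funext => n; rewrite opprB.
Qed.

Lemma qnorm_eq0 f : linf nE f -> (qnorm nE f = 0 <-> c0 nE f).
Proof.
move=> f_linf; split=> [f0 | /c0P Hf].
  have f_le0 : qnorm nE f <= 0 by rewrite f0.
  apply/c0P => e e0; have [N HN] := (qnorm_leP _ 0 f_linf).1 f_le0 e e0.
  by exists N => n Nn; rewrite -[e]add0r HN.
apply: le_anti; rewrite qnorm_ge0 andbT; apply/(qnorm_leP _ 0 f_linf) => e e0.
by have [N HN] := Hf e e0; exists N => n Nn; rewrite add0r HN.
Qed.

Lemma qnormZ_le a f :
  linf nE f -> qnorm nE (fun n => a *: f n) <= abs a * qnorm nE f.
Proof.
move=> f_linf; apply/(qnorm_leP _ _ (linfZ a f_linf)) => e e0.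
have ea0 : 0 < e / (abs a + 1) by rewrite divr_gt0 // ltr_wpDl ?abs_ge0.
have [N HN] := (qnorm_leP _ _ f_linf).1 (lexx _) _ ea0.
exists N => n Nn; rewrite nEZ.
apply: le_trans (ler_wpM2l (abs_ge0 a) (HN n Nn)) _.
rewrite mulrDr lerD2l mulrA ler_pdivrMr ?ltr_wpDl ?abs_ge0 //.
have := abs_ge0 a; nra.
Qed.

Lemma qnormZ a f :
  linf nE f -> qnorm nE (fun n => a *: f n) = abs a * qnorm nE f.
Proof.
move=> f_linf; apply: le_anti; rewrite qnormZ_le //=.
have [->|a0] := eqVneq a 0.
  have abs0 : abs 0 = 0 by case: Habs => _ abs_eq0 _ _; apply/abs_eq0.
  by rewrite abs0 mul0r qnorm_ge0.
have := qnormZ_le a^-1 _ (linfZ a f_linf).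
rewrite (_ : (fun n => a^-1 *: (a *: f n)) = f); last first.
  by apply: funext => n; rewrite scalerA mulVf // scale1r.
by move=> /(ler_wpM2l (abs_ge0 a)); rewrite mulrA absVK // mul1r.
Qed.

Lemma qnormD f g : linf nE f -> linf nE g ->
  qnorm nE (fun n => f n + g n) <= Num.max (qnorm nE f) (qnorm nE g).
Proof.
move=> f_linf g_linf; apply/(qnorm_leP _ _ (linfD f_linf g_linf)) => e e0.
have [N1 HN1] := (qnorm_leP _ _ f_linf).1 (lexx _) e e0.
have [N2 HN2] := (qnorm_leP _ _ g_linf).1 (lexx _) e e0.
exists (maxn N1 N2) => n; rewrite geq_max => /andP[n1 n2].
apply: le_trans (nED _ _) _; rewrite ge_max; apply/andP; split.
  by apply: le_trans (HN1 n n1) _; rewrite lerD2r le_max lexx.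
by apply: le_trans (HN2 n n2) _; rewrite lerD2r le_max lexx orbT.
Qed.

Lemma qnorm_diag x : qnorm nE (diag x) = nE x.
Proof.
apply/le_anti/andP; split; first by apply: (@qnorm_le_eventually _ 0).
have x_linf : linf nE (diag x) by exists (nE x).
apply/ler_addgt0Pr => e e0.
have [N HN] := (qnorm_leP _ _ x_linf).1 (lexx _) e e0; exact: HN N (leqnn N).
Qed.

Section NestedBalls.
Variables (c : nat -> nat -> E) (r : nat -> R).
Local Notation ball := (Defs.closed_ball (linf nE) (qdist nE)).
Hypothesis c_linf : forall k, linf nE (c k).
Hypothesis r_ge0 : forall k, 0 <= r k.
Hypothesis ball_nested : forall k, ball (c k.+1) (r k.+1) `<=` ball (c k) (r k).

Lemma center_in_ball k : ball (c k) (r k) (c k).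
Proof.
by split=> //; apply: (@qnorm_le_eventually _ 0) => n _; rewrite subrr nE0.
Qed.

Lemma qdist_nested {i j} : (i <= j)%N -> qdist nE (c j) (c i) <= r i.
Proof.
move=> ij; suff : ball (c j) (r j) `<=` ball (c i) (r i).
  by move=> /(_ _ (center_in_ball j)) [].
rewrite -(subnKC ij); elim: (j - i)%N => [|d IH]; first by rewrite addn0.
by rewrite addnS; apply: subset_trans (ball_nested _) IH.
Qed.

Lemma eventually_close_centers j : exists N, forall n, (N <= n)%N ->
  forall i, (i <= j)%N -> nE (c j n - c i n) <= r i + j.+1%:R^-1.
Proof.
have [N _ HN] : \forall n \near \oo,
    forall i : 'I_j.+1, nE (c j n - c i n) <= r i + j.+1%:R^-1.
  apply: filter_forall => i; have ij : (i <= j)%N by rewrite -ltnS.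
  have inv_gt0 : 0 < j.+1%:R^-1 :> R by rewrite invr_gt0 ltr0Sn.
  have [N HN] := (qnorm_leP _ _ (linfB (c_linf j) (c_linf i))).1 (qdist_nested ij)
    _ inv_gt0.
  by exists N.
by exists N => n Nn i ij; exact: (HN n Nn (Ordinal (ij : (i < j.+1)%N))).
Qed.

Lemma diag_centers_close (N : nat -> nat) :
  (forall j n, (N j <= n)%N ->
    forall i, (i <= j)%N -> nE (c j n - c i n) <= r i + j.+1%:R^-1) ->
  forall k n i, (i <= k)%N -> (k <= n)%N -> (N k <= n)%N ->
  nE (c (diag_index N n) n - c i n) <= r i + k.+1%:R^-1.
Proof.
move=> HN k n i ik kn Nkn; have [km Nm] := diag_indexP N kn Nkn.
apply: le_trans (HN _ _ Nm _ (leq_trans ik km)) _.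
by rewrite lerD2l lef_pV2 ?posrE // ler_nat.
Qed.

Lemma nested_balls_meet : exists y, forall k, ball (c k) (r k) y.
Proof.
have [N HN] := choice eventually_close_centers.
pose y n := c (diag_index N n) n.
have y_close := diag_centers_close N HN.
have y_linf : linf nE y.
  rewrite (_ : y = fun n => (y n - c 0%N n) + c 0%N n); last first.
    by apply: funext => n; rewrite subrK.
  apply: linfD (c_linf 0); apply: (@linf_eventually _ (N 0%N) (r 0%N + 1)) => n n0.
  by have := y_close 0%N n 0%N (leqnn 0) (leq0n n) n0; rewrite invr1.
exists y => k; split=> //; apply/(qnorm_leP _ _ (linfB y_linf (c_linf k))) => e e0.
have [k' _ Hk'] := near_infty_natSinv_lt (PosNum e0).
exists (maxn (maxn k k') (N (maxn k k'))) => n; rewrite geq_max => /andP[kn Nn].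
apply: le_trans (y_close _ n k (leq_maxl _ _) kn Nn) _.
rewrite lerD2l ltW //; apply: Hk'; exact: leq_maxr.
Qed.

End NestedBalls.

Lemma linf_spherically_complete : spherically_complete (linf nE) (qdist nE).
Proof. by move=> c r c_linf r_ge0 nested; exact: nested_balls_meet. Qed.

End UltrametricSequences.

Theorem proposition6p1 (R : realType) (K : fieldType) (abs : K -> R)
  (E : lmodType K) (nE : E -> R) :
  ultra_absval abs -> nontrivial_absval abs -> ultra_norm abs nE ->
  ((forall f, c0 nE f -> linf nE f) /\
   c0 nE (fun _ => 0) /\
   (forall (a : K) f g, c0 nE f -> c0 nE g -> c0 nE (fun n => a *: f n + g n)) /\
   (forall (fk : nat -> nat -> E) (g : nat -> E),
      (forall k, c0 nE (fk k)) -> linf nE g ->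
      (fun k => supnorm nE (fun n => fk k n - g n)) @ \oo --> (0 : R) ->
      c0 nE g) /\
   (forall f g, linf nE f -> linf nE g -> c0 nE (fun n => f n - g n) ->
      qnorm nE f = qnorm nE g) /\
   (forall f, linf nE f -> 0 <= qnorm nE f) /\
   (forall f, linf nE f -> (qnorm nE f = 0 <-> c0 nE f)) /\
   (forall (a : K) f, linf nE f -> qnorm nE (fun n => a *: f n) = abs a * qnorm nE f) /\
   (forall f g, linf nE f -> linf nE g ->
      qnorm nE (fun n => f n + g n) <= Num.max (qnorm nE f) (qnorm nE g))) /\
  spherically_complete (linf nE) (qdist nE) /\
  ((forall x, linf nE (diag x)) /\
   (forall (a : K) x y,
      c0 nE (fun n => diag (a *: x + y) n - (a *: diag x n + diag y n))) /\
   (forall x, qnorm nE (diag x) = nE x)).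
Proof.
move=> Habs _ HnE.
split; [|split; [exact: linf_spherically_complete Habs HnE|]].
- split; first exact: c0_linf HnE.
  split; first exact: c0_0 HnE.
  split; first exact: c0_lin Habs HnE.
  split; first exact: c0_closed Habs HnE.
  split; first exact: qnorm_c0_eq Habs HnE.
  split; first by move=> f _; exact: qnorm_ge0 HnE f.
  split; first by move=> f; exact: qnorm_eq0 Habs HnE f.
  split; first by move=> a f; exact: qnormZ Habs HnE a f.
  by move=> f g; exact: qnormD Habs HnE f g.
- split; [by move=> x; exists (nE x) | split; last exact: qnorm_diag Habs HnE].
  move=> a x y; rewrite (_ : (fun n => _) = fun _ => 0); first exact: c0_0 HnE.
  by apply: funext => n; rewrite /diag subrr.
Qed.
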